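(* If $S$ is an infinite meet-semilattice, then the lattice $Sub_\wedge(S)$ of meet-subsemilattices of $S$ (ordered by inclusion) contains a chain isomorphic to $\mathbb{Q}$. Consequently, $Sub_\wedge(S)$ is order-scattered if and only if $S$ is finite.
   Context: A poset is order-scattered if it contains no subset order-isomorphic to the chain $\mathbb{Q}$ of rationals. *)

From HB Require Import structures.
From mathcomp Require Import all_boot all_order all_algebra.
From mathcomp Require Import boolp classical_sets cardinality.
Set Implicit Arguments. Unset Strict Implicit. Unset Printing Implicit Defensive.
Import Order.TTheory GRing.Theory Num.Theory.
Local Open Scope classical_set_scope.

(* A subset of a meet-semilattice closed under binary meets
   (a meet-subsemilattice; the empty set is included). *)
Definition meet_closed (d : Order.disp_t) (S : meetSemilatticeType d) (A : set S) :=
  forall x y, A x -> A y -> A (Order.meet x y).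

Definition SubMeet (d : Order.disp_t) (S : meetSemilatticeType d) :=
  {A : set S | meet_closed A}.

Definition sub_le (d : Order.disp_t) (S : meetSemilatticeType d)
  (A B : SubMeet S) : Prop := proj1_sig A `<=` proj1_sig B.

Definition Q_embedding (T : Type) (le : T -> T -> Prop) (f : rat -> T) :=
  forall q r : rat, (q <= r)%R <-> le (f q) (f r).

Definition order_scattered (T : Type) (le : T -> T -> Prop) :=
  ~ exists f : rat -> T, Q_embedding le f.

From Pilot Require Import Defs.
From mathcomp Require Import all_boot all_order all_algebra.
From mathcomp Require Import boolp classical_sets cardinality functions.
Import Order.TTheory GRing.Theory Num.Theory.
Local Open Scope classical_set_scope.

(* By Ramsey's theorem an infinite poset contains an infinite chain or an
   infinite antichain; index it injectively by the rationals, x : rat -> S.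
   In either case every x t lies outside some meet-subsemilattice C t that
   contains all the other x s (for a chain: the other points themselves; for
   an antichain: the down-set of the other points).  Sending a set J of
   rationals to the intersection of the C t with t outside J is then an order
   embedding of the subsets of Q into Sub_meet(S), and composing it with the
   Dedekind cuts q |-> {t | t < q} embeds Q.  Conversely, elements witnessing
   the strict inclusions f n < f (n+1) along an embedding f of Q are pairwise
   distinct, so S is infinite. *)

Lemma infinite_setT_injective_nat (T : Type) :
  infinite_set [set: T] <-> exists y : nat -> T, injective y.
Proof.
split=> [/infiniteP/card_leP [f] | [y y_inj] fin_T].
  pose g : [set: nat] -> [set: T] := f.
  exists (fun n => \val (g (@SigSub _ _ _ n (mem_set I)))) => m n /val_inj E.
  by case: (inj (mem_set I) (mem_set I) E).
apply: infinite_nat; rewrite -(preimage_setT y).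
exact: finite_preimage (fun m n _ _ => @y_inj m n) fin_T.
Qed.

Lemma increasing_inj (g : nat -> nat) :
  (forall i, (g i < g i.+1)%N) -> injective g.
Proof.
move=> /(homo_ltn ltn_trans) g_lt i j E.
by case: (ltngtP i j) => // /g_lt; rewrite E ltnn.
Qed.

Definition unbounded (A : set nat) := forall n, exists2 m, (n < m)%N & A m.

Lemma unbounded_split {A : set nat} (P : set nat) :
  unbounded A -> unbounded (A `&` P) \/ unbounded (A `&` ~` P).
Proof.
move=> A_ub; apply: contrapT => /not_orP[/existsNP[n1 H1] /existsNP[n2 H2]].
have [m] := A_ub (maxn n1 n2); rewrite gtn_max => /andP[n1m n2m] Am.
by have [Pm|nPm] := pselect (P m); [apply: H1 | apply: H2]; exists m.
Qed.

Lemma unbounded_increasing_enum {B : set nat} : unbounded B ->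
  exists h : nat -> nat, (forall i, (h i < h i.+1)%N) /\ forall i, B (h i).
Proof.
move=> B_ub.
have /choice[next next_spec] n : exists m, (n < m)%N /\ B m.
  by have [m] := B_ub n; exists m.
pose h := fix h i := if i is i'.+1 then next (h i') else next 0%N.
exists h; split=> [i|]; first by case: (next_spec (h i)).
by case=> [|i]; [case: (next_spec 0%N) | case: (next_spec (h i))].
Qed.

Section Ramsey.
Variable c : nat -> nat -> bool.

Lemma ramsey_step {A : set nat} : unbounded A ->
  exists (a : nat) (b : bool) (B : set nat), A a /\ unbounded B /\
    forall m, B m -> [/\ A m, (a < m)%N & c a m = b].
Proof.
move=> A_ub; have [a _ Aa] := A_ub 0%N.
have Aa_ub : unbounded (A `&` [set m | (a < m)%N]).
  move=> n; have [m] := A_ub (maxn n a); rewrite gtn_max => /andP[nm am] Am.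
  by exists m.
case: (unbounded_split [set m | c a m] Aa_ub) => B_ub.
  exists a, true, (A `&` [set m | (a < m)%N] `&` [set m | c a m]).
  by split=> //; split=> // m [[Am am] cam].
exists a, false, (A `&` [set m | (a < m)%N] `&` ~` [set m | c a m]).
by split=> //; split=> // m [[Am am] /negP/negbTE].
Qed.

Lemma ramsey : exists (g : nat -> nat) (b : bool),
  (forall i, (g i < g i.+1)%N) /\
  forall i j, (i < j)%N -> c (g i) (g j) = b.
Proof.
pose U := {A : set nat | unbounded A}.
have step (A : U) : exists p : nat * bool * U, proj1_sig A p.1.1 /\
    forall m, proj1_sig p.2 m ->
      [/\ proj1_sig A m, (p.1.1 < m)%N & c p.1.1 m = p.1.2].
  have [a [b [B [Aa [B_ub B_spec]]]]] := ramsey_step (proj2_sig A).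
  by exists (a, b, exist _ B B_ub).
have [next next_spec] := choice step.
(* s k is the k-th set of a decreasing sequence of unbounded sets; a k is the
   element picked in it, whose colour towards all later a l is b k. *)
have setT_ub : unbounded [set: nat] by move=> n; exists n.+1.
pose s := fix s k := if k is k'.+1 then (next (s k')).2 else exist _ _ setT_ub.
pose a k := (next (s k)).1.1.
pose b k := (next (s k)).1.2.
have s_decr k l : (k <= l)%N -> proj1_sig (s l) `<=` proj1_sig (s k).
  elim: l => [|l IH]; first by rewrite leqn0 => /eqP->.
  rewrite leq_eqVlt ltnS => /orP[/eqP-> // | /IH kl m sm].
  by apply: kl; case: (next_spec (s l)) => _ /(_ m sm)[].
have a_b k l : (k < l)%N -> (a k < a l)%N /\ c (a k) (a l) = b k.
  move=> kl; have al : proj1_sig (s k.+1) (a l).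
    by apply: s_decr kl _ _; case: (next_spec (s l)).
  by case: (next_spec (s k)) => _ /(_ _ al)[].
have [b0 b0_ub] : exists b0, unbounded [set k | b k = b0].
  have [ub|ub] := unbounded_split [set k | b k] setT_ub.
    by exists true => n; have [m ? [_ bm]] := ub n; exists m.
  by exists false => n; have [m ? [_ /negP/negbTE]] := ub n; exists m.
have [h [h_lt h_b0]] := unbounded_increasing_enum b0_ub.
exists (a \o h), b0; split=> [i | i j ij]; first by case: (a_b _ _ (h_lt i)).
by case: (a_b _ _ (homo_ltn ltn_trans h_lt ij)) => _ ->; rewrite h_b0.
Qed.

End Ramsey.

Lemma ramsey_sym (c : nat -> nat -> bool) : (forall i j, c i j = c j i) ->
  exists (g : nat -> nat) (b : bool),
    injective g /\ forall i j, i != j -> c (g i) (g j) = b.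
Proof.
move=> c_sym; have [g [b [g_lt g_mono]]] := ramsey c.
exists g, b; split=> [|i j]; first exact: increasing_inj.
by case: ltngtP => // ij _; [|rewrite c_sym]; apply: g_mono.
Qed.

Lemma infinite_chain_or_antichain d (S : porderType d) :
  infinite_set [set: S] -> exists x : rat -> S, injective x /\
    ((forall q r, (x q >=< x r)%O) \/
     (forall q r, q <> r -> ~~ (x q >=< x r)%O)).
Proof.
move=> /infinite_setT_injective_nat[y y_inj].
have [g [b [g_inj g_b]]] :=
  @ramsey_sym (fun i j => (y i >=< y j)%O) (fun i j => comparable_sym _ _).
have pickle_inj : injective (@pickle rat) := pcan_inj pickleK.
pose x := y \o g \o @pickle rat.
have x_b q r : q <> r -> (x q >=< x r)%O = b.
  by move=> qr; apply: g_b; apply/eqP => /pickle_inj.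
exists x; split; first by move=> q r /y_inj /g_inj /pickle_inj.
case: b {g_b} x_b => x_b; [left => q r | right => q r /x_b ->//].
by have [->|/x_b ->//] := pselect (q = r); rewrite comparablexx.
Qed.

Section MeetIndependent.
Variables (d : Order.disp_t) (S : meetSemilatticeType d) (I : Type).

Definition meet_independent (x : I -> S) := forall t, exists C : set S,
  [/\ Defs.meet_closed C, forall s, s <> t -> C (x s) & ~ C (x t)].

Lemma meet_closed_bigcap (J : set I) {C : I -> set S} :
  (forall t, Defs.meet_closed (C t)) -> Defs.meet_closed (\bigcap_(t in J) C t).
Proof.
by move=> C_closed u v Cu Cv t Jt; apply: C_closed; [apply: Cu | apply: Cv].
Qed.

Lemma chain_meet_independent (x : I -> S) :
  injective x -> (forall s t, (x s >=< x t)%O) -> meet_independent x.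
Proof.
move=> x_inj x_chain t; exists (x @` [set s | s <> t]); split.
- move=> _ _ [s st <-] [r rt <-].
  case/orP: (x_chain s r) => [/meet_l -> | /meet_r ->].
  + by exists s.
  + by exists r.
- by move=> s st; exists s.
- by move=> [s st /x_inj].
Qed.

Lemma antichain_meet_independent (x : I -> S) :
  (forall s t, s <> t -> ~~ (x s >=< x t)%O) -> meet_independent x.
Proof.
move=> x_antichain t; exists [set z | exists2 s, s <> t & (z <= x s)%O]; split.
- by move=> u v [s st us] _; exists s => //; apply: le_trans (leIl u v) us.
- by move=> s st; exists s.
- move=> [s st ts]; move: (x_antichain t s (nesym st)).
  by rewrite /Order.comparable ts.
Qed.

Lemma meet_independent_embedding (x : I -> S) : meet_independent x ->
  exists F : set I -> SubMeet S,
    forall J K, J `<=` K <-> sub_le (F J) (F K).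
Proof.
move=> /choice[C C_spec].
have C_closed t : Defs.meet_closed (C t) by case: (C_spec t).
have F_x (J : set I) s : (\bigcap_(t in ~` J) C t) (x s) <-> J s.
  split=> [Fs | Js t /= nJt]; last first.
    by case: (C_spec t) => _ + _; apply=> st; apply: nJt; rewrite -st.
  by apply: contrapT => nJs; case: (C_spec s) => _ _; apply; apply: Fs.
exists (fun J => exist _ _ (meet_closed_bigcap (~` J) C_closed)) => J K.
split=> [JK z Fz t nKt | FJK s /F_x Js]; first by apply: Fz => Jt; apply/nKt/JK.
by apply/F_x/FJK.
Qed.

End MeetIndependent.

Lemma le_lt_cut d (T : orderType d) (q r : T) :
  (q <= r)%O <-> [set t | (t < q)%O] `<=` [set t | (t < r)%O].
Proof.
split=> [qr t /= tq | cut_sub]; first exact: lt_le_trans tq qr.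
by rewrite leNgt; apply/negP => /cut_sub; rewrite /= ltxx.
Qed.

Lemma infinite_Q_embedding d (S : meetSemilatticeType d) :
  infinite_set [set: S] ->
  exists f : rat -> SubMeet S, Q_embedding (@sub_le d S) f.
Proof.
move=> /infinite_chain_or_antichain[x [x_inj x_chain_antichain]].
have [F F_emb] : exists F : set rat -> SubMeet S,
    forall J K, J `<=` K <-> sub_le (F J) (F K).
  apply: meet_independent_embedding.
  case: x_chain_antichain; first exact: chain_meet_independent.
  exact: antichain_meet_independent.
by exists (fun q => F [set t | (t < q)%R]) => q r; rewrite -F_emb -le_lt_cut.
Qed.

Lemma Q_embedding_infinite d (S : meetSemilatticeType d)
  (f : rat -> SubMeet S) :
  Q_embedding (@sub_le d S) f -> infinite_set [set: S].
Proof.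
move=> f_emb; pose F (n : nat) := proj1_sig (f n%:R%R).
have F_mono m n : (m <= n)%N -> F m `<=` F n by rewrite -(ler_nat rat) f_emb.
have F_strict n : exists z, F n.+1 z /\ ~ F n z.
  have : ~ sub_le (f n.+1%:R%R) (f n%:R%R) by rewrite -f_emb ler_nat ltnn.
  by move=> /existsNP[z /not_implyP]; exists z.
have [z z_spec] := choice F_strict.
have z_lt m n : (m < n)%N -> z m <> z n.
  move=> mn zmn; case: (z_spec n) => _; apply; rewrite -zmn.
  exact: F_mono mn _ (z_spec m).1.
apply/infinite_setT_injective_nat; exists z => m n zmn.
by case: (ltngtP m n) => // [/z_lt | /z_lt /nesym].
Qed.

Theorem theorem6p1 (d : Order.disp_t) (S : meetSemilatticeType d) :
  (~ finite_set [set: S] ->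
     exists f : rat -> SubMeet S, Q_embedding (@sub_le d S) f) /\
  (order_scattered (@sub_le d S) <-> finite_set [set: S]).
Proof.
split; first exact: infinite_Q_embedding.
split=> [scattered | fin_S [f f_emb]]; last first.
  exact: Q_embedding_infinite f_emb fin_S.
by apply: contrapT => /infinite_Q_embedding /scattered.
Qed.
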